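(* Let $\gamma\in\mathbf{Sp}(2n,\mathbb R)$ with $\gamma\tau(\gamma)=I$. Then there exists $h\in\mathbf{Sp}(2n,\mathbb R)$ with $\gamma=\tau(h)h^{-1}$ if and only if $\mathfrak h_n^\gamma\neq\emptyset$.
   Context: $\mathbf{Sp}(2n,\mathbb R)$: real matrices $g=\begin{pmatrix}A&B\\C&D\end{pmatrix}$ with ${}^tgJg=J$, $J=\begin{pmatrix}0&I\\-I&0\end{pmatrix}$, acting on $\mathfrak h_n=\{Z\in M_n(\mathbb C):{}^tZ=Z,\mathrm{Im}Z>0\}$ by $gZ=(AZ+B)(CZ+D)^{-1}$. $\tau\begin{pmatrix}A&B\\C&D\end{pmatrix}=\begin{pmatrix}A&-B\\-C&D\end{pmatrix}$ and $\tau(Z)=-\overline Z$; $\mathfrak h_n^\gamma=\{Z\in\mathfrak h_n:\gamma Z=\tau(Z)\}$. *)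

From HB Require Import structures.
From mathcomp Require Import all_boot all_order all_algebra.
From mathcomp Require Import complex.
From mathcomp Require Import reals.
Set Implicit Arguments. Unset Strict Implicit. Unset Printing Implicit Defensive.
Import Order.TTheory GRing.Theory Num.Theory.
Local Open Scope ring_scope.

Section Siegel.
Variable R : realType.
Variable n : nat.

Definition Jmx : 'M[R]_(n + n) := block_mx 0 1%:M (- 1%:M) 0.

Definition symplectic (g : 'M[R]_(n + n)) : Prop := g^T *m Jmx *m g = Jmx.

Definition tau_mx (g : 'M[R]_(n + n)) : 'M[R]_(n + n) :=
  block_mx (ulsubmx g) (- ursubmx g) (- dlsubmx g) (drsubmx g).

Definition cmx (m p : nat) (A : 'M[R]_(m, p)) : 'M[R[i]]_(m, p) :=
  map_mx (fun x => (x%:C)%C) A.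

Definition in_siegel (Z : 'M[R[i]]_n) : Prop :=
  Z^T = Z /\
  forall v : 'rV[R]_n, v != 0 ->
    0 < (v *m map_mx (@complex.Im R) Z *m v^T) ord0 ord0.

Definition sp_act (g : 'M[R]_(n + n)) (Z : 'M[R[i]]_n) : 'M[R[i]]_n :=
  (cmx (ulsubmx g) *m Z + cmx (ursubmx g)) *m
    invmx (cmx (dlsubmx g) *m Z + cmx (drsubmx g)).

Definition tau_Z (Z : 'M[R[i]]_n) : 'M[R[i]]_n :=
  \matrix_(i, j) (- (conjc (Z i j))).

Definition siegel_gamma (gamma : 'M[R]_(n + n)) (Z : 'M[R[i]]_n) : Prop :=
  in_siegel Z /\ sp_act gamma Z = tau_Z Z.
End Siegel.

From HB Require Import structures.
From mathcomp Require Import all_boot all_order all_algebra.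
From mathcomp Require Import complex.
From mathcomp Require Import reals.
From mathcomp Require Import ring lra.
Set Implicit Arguments. Unset Strict Implicit. Unset Printing Implicit Defensive.
Import Order.TTheory GRing.Theory Num.Theory.
Local Open Scope ring_scope.

(* A symplectic h = [[a, b], [c, d]] is encoded by the frame P = b + i a,
   Q = d + i c (the complexified columns of h (i I; I)): h is symplectic iff
   Q^T P is symmetric and Q^H P - P^H Q = 2 i, and then Z = P Q^-1 = h (i I) is
   a point of the Siegel space.  In these terms gamma h = tau h reads
   A P + B Q = - conj P and C P + D Q = conj Q, which says gamma Z = tau Z.
   Conversely, for Z in h_n^gamma the factor M = C Z + D satisfies
   M conj M = 1 (from gamma tau gamma = 1) and M^H (Im Z) M = Im Z (from
   gamma symplectic).  A Hilbert 90 argument yields c with conj c = M c, a real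
   Cholesky-type congruence normalises c^H (Im Z) c = 1, and (Z c, c) is then
   the frame of the required h. *)

Local Notation conjm := (map_mx conjc).
Local Notation "A ^H" := (trmx (map_mx conjc A)) (format "A ^H").

Section ComplexMatrix.
Variable R : realType.
Implicit Types (m p q : nat).

Lemma cmx0 m p : cmx (0 : 'M[R]_(m, p)) = 0.
Proof. exact: map_mx0. Qed.

Lemma cmx1 m : cmx (1%:M : 'M[R]_m) = 1%:M.
Proof. exact: map_mx1. Qed.

Lemma cmxM m p q (A : 'M[R]_(m, p)) (B : 'M[R]_(p, q)) :
  cmx (A *m B) = cmx A *m cmx B.
Proof. exact: map_mxM. Qed.

Lemma cmxT m p (A : 'M[R]_(m, p)) : cmx A^T = (cmx A)^T.
Proof. by apply/matrixP => i j; rewrite !mxE. Qed.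

Definition cplxmx m p (X Y : 'M[R]_(m, p)) : 'M[R[i]]_(m, p) :=
  cmx X + 'i%C *: cmx Y.

Lemma two_i_neq0 : Complex 0 2 != 0 :> R[i].
Proof. by rewrite eq_complex /= negb_and pnatr_eq0 orbT. Qed.

Lemma cplxmxE m p (X Y : 'M[R]_(m, p)) i j :
  cplxmx X Y i j = Complex (X i j) (Y i j).
Proof.
rewrite !mxE; apply/eqP; rewrite eq_complex /=.
by apply/andP; split; apply/eqP; ring.
Qed.

Lemma cplxmx_eta m p (M : 'M[R[i]]_(m, p)) :
  M = cplxmx (map_mx (@complex.Re R) M) (map_mx (@complex.Im R) M).
Proof. by apply/matrixP => i j; rewrite cplxmxE !mxE; case: (M i j). Qed.

Lemma cplxmx_inj m p (X Y X' Y' : 'M[R]_(m, p)) :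
  cplxmx X Y = cplxmx X' Y' -> X = X' /\ Y = Y'.
Proof.
by move=> /matrixP E; split; apply/matrixP => i j; have := E i j;
  rewrite !cplxmxE => -[].
Qed.

Lemma tr_cplxmx m p (X Y : 'M[R]_(m, p)) : (cplxmx X Y)^T = cplxmx X^T Y^T.
Proof. by apply/matrixP => i j; rewrite mxE !cplxmxE !mxE. Qed.

Lemma conj_cplxmx m p (X Y : 'M[R]_(m, p)) :
  conjm (cplxmx X Y) = cplxmx X (- Y).
Proof. by apply/matrixP => i j; rewrite mxE !cplxmxE !mxE. Qed.

Lemma adj_cplxmx m p (X Y : 'M[R]_(m, p)) : (cplxmx X Y)^H = cplxmx X^T (- Y^T).
Proof. by apply/matrixP => i j; rewrite 2!mxE !cplxmxE !mxE. Qed.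

Lemma cplxmxD m p (X Y X' Y' : 'M[R]_(m, p)) :
  cplxmx X Y + cplxmx X' Y' = cplxmx (X + X') (Y + Y').
Proof. by apply/matrixP => i j; rewrite mxE !cplxmxE !mxE. Qed.

Lemma cplxmxN m p (X Y : 'M[R]_(m, p)) : - cplxmx X Y = cplxmx (- X) (- Y).
Proof. by apply/matrixP => i j; rewrite mxE !cplxmxE !mxE. Qed.

Lemma cmx_cplxmx m p (X : 'M[R]_(m, p)) : cmx X = cplxmx X 0.
Proof. by apply/matrixP => i j; rewrite cplxmxE !mxE. Qed.

Lemma cmxD m p (X Y : 'M[R]_(m, p)) : cmx (X + Y) = cmx X + cmx Y.
Proof. exact: map_mxD. Qed.

Lemma cmxN m p (X : 'M[R]_(m, p)) : cmx (- X) = - cmx X.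
Proof. exact: map_mxN. Qed.

Lemma mul_cplxmx m p q (X Y : 'M[R]_(m, p)) (X' Y' : 'M[R]_(p, q)) :
  cplxmx X Y *m cplxmx X' Y' =
  cplxmx (X *m X' - Y *m Y') (X *m Y' + Y *m X').
Proof.
have ii : 'i%C * 'i%C = -1 :> R[i].
  by apply/eqP; rewrite eq_complex /=; apply/andP; split; apply/eqP; ring.
rewrite /cplxmx mulmxDl !mulmxDr -!scalemxAl -!scalemxAr !scalerA ii scaleN1r -!cmxM.
by rewrite !cmxD cmxN scalerDr [_ - cmx _]addrC addrACA.
Qed.

Lemma mul_cmx_cplxmx m p q (A : 'M[R]_(m, p)) (X Y : 'M[R]_(p, q)) :
  cmx A *m cplxmx X Y = cplxmx (A *m X) (A *m Y).
Proof. by rewrite cmx_cplxmx mul_cplxmx !mul0mx subr0 addr0. Qed.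

Lemma cmx_inj m p : injective (@cmx R m p).
Proof. by move=> X Y; rewrite !cmx_cplxmx => /cplxmx_inj[]. Qed.

Lemma conjmK m p (A : 'M[R[i]]_(m, p)) : conjm (conjm A) = A.
Proof. by apply/matrixP => i j; rewrite !mxE conjcK. Qed.

Lemma conjm_cmx m p (X : 'M[R]_(m, p)) : conjm (cmx X) = cmx X.
Proof. by apply/matrixP => i j; rewrite !mxE conjc_real. Qed.

Lemma conjm_real m p (A : 'M[R[i]]_(m, p)) :
  conjm A = A -> A = cmx (map_mx (@complex.Re R) A).
Proof.
move=> /matrixP Areal; apply/matrixP => i j; have := Areal i j.
rewrite !mxE; case: (A i j) => a b /= [] Eb.
by apply/eqP; rewrite eq_complex /= eqxx /=; apply/eqP; lra.
Qed.

End ComplexMatrix.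

Section PositiveDefinite.
Variable R : realType.

Definition posdefmx n (Y : 'M[R]_n) : Prop :=
  forall v : 'rV[R]_n, v != 0 -> 0 < (v *m Y *m v^T) ord0 ord0.

Lemma posdefmx_ge0 n (Y : 'M[R]_n) (v : 'rV[R]_n) :
  posdefmx Y -> 0 <= (v *m Y *m v^T) ord0 ord0.
Proof.
move=> Ypos; have [->|v0] := eqVneq v 0; last exact/ltW/Ypos.
by rewrite !mul0mx mxE.
Qed.

Lemma posdefmx1 n : posdefmx (1%:M : 'M[R]_n).
Proof.
move=> v /rV0Pn[j vj0]; rewrite mulmx1 mxE (bigD1 j) //=.
rewrite ltr_pwDl ?sumr_ge0 // => [|k _]; rewrite !mxE -expr2.
  by rewrite lt0r sqrf_eq0 vj0 sqr_ge0.
exact: sqr_ge0.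
Qed.

Lemma posdefmx_congr n (G : 'M[R]_n) (E : 'M[R]_n) :
  posdefmx G -> E \in unitmx -> posdefmx (E^T *m G *m E).
Proof.
move=> Gpos Eu v v0.
have -> : v *m (E^T *m G *m E) *m v^T = v *m E^T *m G *m (v *m E^T)^T.
  by rewrite trmx_mul trmxK !mulmxA.
apply: Gpos; apply: contra v0 => /eqP vE0.
have ETu : E^T \in unitmx by rewrite unitmx_tr.
by rewrite -[v](mulmxK ETu) vE0 mul0mx.
Qed.

Lemma posdefmx_drsub n1 n2 (G : 'M[R]_(n1 + n2)) :
  posdefmx G -> posdefmx (drsubmx G).
Proof.
move=> Gpos v v0; have := Gpos (row_mx 0 v).
rewrite -(submxK G) block_mxKdr mul_row_block tr_row_mx mul_row_col.
rewrite !mul0mx !add0r.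
rewrite trmx0 mulmx0 add0r; apply; apply: contra v0 => /eqP/(congr1 rsubmx).
by rewrite row_mxKr linear0 => ->.
Qed.

Lemma posdefmx_ulsub n1 n2 (G : 'M[R]_(n1 + n2)) :
  posdefmx G -> posdefmx (ulsubmx G).
Proof.
move=> Gpos v v0; have := Gpos (row_mx v 0).
rewrite -(submxK G) block_mxKul mul_row_block tr_row_mx mul_row_col.
rewrite !mul0mx !addr0.
rewrite trmx0 mulmx0 addr0; apply; apply: contra v0 => /eqP/(congr1 lsubmx).
by rewrite row_mxKl linear0 => ->.
Qed.

(* One Cholesky step: E clears the first row and column of G, leaving the
   Schur complement S, to which the induction hypothesis applies. *)
Lemma posdefmx_congr1 n (G : 'M[R]_n) :
  G^T = G -> posdefmx G -> exists N : 'M[R]_n, N^T *m G *m N = 1%:M.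
Proof.
elim: n G => [|n IHn] G Gsym Gpos; first by exists 1%:M; apply/matrixP => -[].
move: G Gsym Gpos; rewrite -[n.+1]/(1 + n)%N => G Gsym Gpos.
have GE := esym (submxK G).
set g := ulsubmx G in GE; set r := ursubmx G in GE.
set r' := dlsubmx G in GE; set G' := drsubmx G in GE.
have : block_mx g^T r'^T r^T G'^T = block_mx g r r' G'.
  by rewrite -tr_block_mx -GE.
case/eq_block_mx => _ _ rE G'sym.
set a := g 0 0; have gE : g = a%:M by apply: mx11_scalar.
have a_gt0 : 0 < a.
  by have := posdefmx_ulsub Gpos (oner_neq0 _); rewrite mul1mx trmx1 mulmx1.
have a0 : a != 0 by rewrite gt_eqF.
pose S := G' - a^-1 *: (r^T *m r).
pose E : 'M[R]_(1 + n) := block_mx 1%:M (- (a^-1 *: r)) 0 1%:M.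
have Eu : E \in unitmx by rewrite unitmxE det_ublock !det1 mulr1 unitr1.
have EGE : E^T *m G *m E = block_mx g 0 0 S.
  rewrite GE /E tr_block_mx !trmx1 trmx0 !mulmx_block.
  rewrite !mul1mx !mul0mx !mulmx1 !mulmx0 ?add0r ?addr0 -rE gE.
  rewrite mul_scalar_mx mul_mx_scalar !linearN !linearZ /= scalerN scalerA mulfV //.
  rewrite scale1r scalerN scalerA mulfV // scale1r !addNr mul0mx oppr0 scaler0 add0r.
  by rewrite scalerN mulNmx -scalemxAl addrC.
have Ssym : S^T = S by rewrite linearB linearZ /= trmx_mul trmxK G'sym.
have Spos : posdefmx S.
  by have := posdefmx_drsub (posdefmx_congr Gpos Eu); rewrite EGE block_mxKdr.
have [N' N'E] := IHn S Ssym Spos.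
set s := Num.sqrt a; have s_gt0 : 0 < s by rewrite sqrtr_gt0.
exists (E *m block_mx (s^-1)%:M 0 0 N').
rewrite trmx_mul !mulmxA -(mulmxA _ E^T) -(mulmxA _ (E^T *m G)) EGE.
rewrite tr_block_mx !trmx0 tr_scalar_mx !mulmx_block.
rewrite !mulmx0 !mul0mx !addr0 !add0r N'E gE !mul_scalar_mx scale_scalar_mx.
rewrite -scalar_mxM (scalar_mx_block 1 n (1 : R)); congr block_mx; rewrite ?mul0mx //.
by congr (_%:M); rewrite mulrAC -expr2 exprVn sqr_sqrtr ?mulVf // ltW.
Qed.

End PositiveDefinite.

Section HermitianForm.
Variables (R : realType) (n : nat).
Implicit Types (Y G : 'M[R]_n) (P Q c : 'M[R[i]]_n).

Lemma posdefmx_herm Y (w : 'rV[R[i]]_n) :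
  Y^T = Y -> posdefmx Y -> w != 0 ->
  exists2 x : R, 0 < x & (conjm w *m cmx Y *m w^T) ord0 ord0 = x%:C%C.
Proof.
move=> Ysym Ypos w0; rewrite (cplxmx_eta w).
set u := map_mx _ w; set v := map_mx _ w.
have uv0 : (u != 0) || (v != 0).
  apply: contraR w0; rewrite negb_or !negbK => /andP[/eqP u0 /eqP v0].
  rewrite (cplxmx_eta w) -/u -/v u0 v0.
  by apply/eqP/matrixP => i j; rewrite cplxmxE !mxE.
have uYv : u *m Y *m v^T = v *m Y *m u^T.
  rewrite [LHS]mx11_scalar -tr_scalar_mx -mx11_scalar.
  by rewrite !trmx_mul trmxK Ysym mulmxA.
exists ((u *m Y *m u^T) ord0 ord0 + (v *m Y *m v^T) ord0 ord0).
  by case/orP: uv0 => [u0|v0]; [apply: ltr_pwDl | apply: ltr_pwDr];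
    rewrite ?Ypos ?posdefmx_ge0.
rewrite conj_cplxmx cmx_cplxmx tr_cplxmx !mul_cplxmx !mulmx0 subr0 add0r.
rewrite !mulNmx opprK uYv subrr cplxmxE !mxE.
by apply/eqP; rewrite eq_complex /= !eqxx.
Qed.

Lemma posdefmx_congrH Y G c :
  Y^T = Y -> posdefmx Y -> c \in unitmx -> c^H *m cmx Y *m c = cmx G ->
  posdefmx G.
Proof.
move=> Ysym Ypos cu cYc v v0; pose w := cmx v *m c^T.
have w0 : w != 0.
  apply: contra v0 => /eqP w0; apply/eqP/cmx_inj; rewrite cmx0.
  have cTu : c^T \in unitmx by rewrite unitmx_tr.
  by rewrite -[cmx v](mulmxK cTu) -/w w0 mul0mx.
have [x x_gt0] := posdefmx_herm Ysym Ypos w0.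
have -> : conjm w *m cmx Y *m w^T = cmx (v *m G *m v^T).
  rewrite !cmxM -cYc cmxT /w map_mxM conjm_cmx -map_trmx trmx_mul trmxK.
  by rewrite !mulmxA.
by rewrite mxE => /complexI ->.
Qed.

Lemma definite_form_unitmx Y P Q (k : R[i]) :
  Y^T = Y -> posdefmx Y -> k != 0 ->
  Q^H *m P - P^H *m Q = k *: cmx Y -> Q \in unitmx.
Proof.
move=> Ysym Ypos k0 QPE; rewrite unitmxE unitfE -det_tr.
apply/negP => /det0P[v v0 vQ0].
have Qv0 : Q *m v^T = 0 by rewrite -[Q]trmxK -trmx_mul vQ0 trmx0.
have vQH0 : conjm v *m Q^H = 0 by rewrite map_trmx -map_mxM vQ0 map_mx0.
have [x x_gt0 xE] := posdefmx_herm Ysym Ypos v0.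
have := congr1 (fun M => (conjm v *m M *m v^T) ord0 ord0) QPE => /=.
rewrite mulmxBr mulmxBl !mulmxA vQH0 -(mulmxA _ Q) Qv0 !mul0mx mulmx0 subr0.
rewrite -scalemxAr -scalemxAl [X in _ = X]mxE xE mxE => /esym/eqP.
by rewrite mulf_eq0 (negPf k0) /= eq_complex /= gt_eqF.
Qed.

End HermitianForm.

Section Symplectic.
Variables (R : realType) (n : nat).
Implicit Types (a b c d : 'M[R]_n) (g : 'M[R]_(n + n)).

Lemma symplecticP a b c d :
  symplectic (block_mx a b c d) <->
  [/\ a^T *m c = c^T *m a, b^T *m d = d^T *m b & a^T *m d - c^T *m b = 1%:M].
Proof.
rewrite /symplectic /Jmx tr_block_mx !mulmx_block.
rewrite !mulmx0 !mulmx1 !mulmxN !mulmx1 !add0r !addr0 !mulNmx.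
split=> [/eq_block_mx[e1 e2 _ e4]|[e1 e4 e2]].
  by split; [apply/eqP; rewrite -subr_eq0 addrC e1|
             apply/eqP; rewrite -subr_eq0 addrC e4|rewrite addrC e2].
have e3 : d^T *m a - b^T *m c = 1%:M.
  by have := congr1 trmx e2; rewrite linearB /= !trmx_mul !trmxK trmx1.
rewrite e1 e4 !addNr addrC e2; congr block_mx.
by rewrite -e3 opprB addrC.
Qed.

Lemma symplectic_unitmx g : symplectic g -> g \in unitmx.
Proof.
move=> gsym; suff : (- (Jmx R n *m g^T *m Jmx R n)) *m g = 1%:M.
  by case/mulmx1_unit.
have JJ : Jmx R n *m Jmx R n = - 1%:M.
  rewrite /Jmx mulmx_block !mulmx0 !mul0mx !mulmx1 !mulmxN !mulmx1 !add0r !addr0.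
  by rewrite -[0]oppr0 -opp_block_mx -scalar_mx_block.
by rewrite mulNmx -!mulmxA (mulmxA g^T) gsym JJ opprK.
Qed.

Lemma tau_block_mx a b c d :
  tau_mx (block_mx a b c d) = block_mx a (- b) (- c) d.
Proof. by rewrite /tau_mx block_mxKul block_mxKur block_mxKdl block_mxKdr. Qed.

Lemma hermJ_col k (U V U' V' : 'M[R[i]]_(n, k)) :
  (col_mx U V)^H *m cmx (Jmx R n) *m col_mx U' V' = U^H *m V' - V^H *m U'.
Proof.
rewrite /cmx /Jmx map_block_mx map_mx0 map_mxN map_mx1 map_col_mx tr_col_mx.
rewrite mul_row_block mul_row_col !mulmx0 !mulmx1 !mulmxN !mulmx1 !add0r !addr0.
by rewrite mulNmx addrC.
Qed.

Lemma symplectic_hermJ g k (W : 'M[R[i]]_(n + n, k)) :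
  symplectic g ->
  (cmx g *m W)^H *m cmx (Jmx R n) *m (cmx g *m W) = W^H *m cmx (Jmx R n) *m W.
Proof.
rewrite /symplectic => gJg; rewrite map_mxM conjm_cmx trmx_mul -cmxT !mulmxA.
by rewrite -!(mulmxA W^H) -!cmxM gJg.
Qed.

End Symplectic.

Section LagrangianFrame.
Variables (R : realType) (n : nat).
Implicit Types (a b c d : 'M[R]_n) (P Q : 'M[R[i]]_n).

(* The frame of h = [[a, b], [c, d]] is (cplxmx b a, cplxmx d c). *)
Definition lagrangian_frame P Q : Prop :=
  Q^T *m P = P^T *m Q /\ Q^H *m P - P^H *m Q = (Complex 0 2)%:M.

Lemma symplectic_frameP a b c d :
  symplectic (block_mx a b c d) <-> lagrangian_frame (cplxmx b a) (cplxmx d c).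
Proof.
have trM (X Y : 'M[R]_n) : X^T *m Y = (Y^T *m X)^T by rewrite trmx_mul trmxK.
have two_i : (Complex 0 2)%:M = cplxmx 0 (1%:M *+ 2) :> 'M[R[i]]_n.
  apply/matrixP => i j; rewrite cplxmxE !mxE.
  by case: (i == j); rewrite ?mulr1n ?addr0.
rewrite /lagrangian_frame !adj_cplxmx !tr_cplxmx !mul_cplxmx.
rewrite !mulNmx !opprK cplxmxN cplxmxD two_i.
apply: (iff_trans (symplecticP a b c d)).
rewrite [d^T *m b]trM [c^T *m a]trM [d^T *m a]trM [b^T *m c]trM.
move: (b^T *m d) (a^T *m c) (a^T *m d) (c^T *m b) => U V W1 W2.
have entries (X Y : 'M[R]_n) i j : X = Y -> X i j = Y i j /\ X j i = Y j i.
  by move=> ->.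
split=> [[S1 S3 S2]|[/cplxmx_inj[F1 F1'] /cplxmx_inj[F2 F2']]].
  split; congr cplxmx; apply/matrixP => i j;
  have [] := entries _ _ i j S1; have [] := entries _ _ i j S3;
  have [] := entries _ _ i j S2; rewrite !mxE ?[j == i]eq_sym; lra.
split; apply/matrixP => i j;
have [] := entries _ _ i j F1; have [] := entries _ _ i j F1';
have [] := entries _ _ i j F2; have [] := entries _ _ i j F2';
rewrite !mxE ?[j == i]eq_sym ?mulr2n; lra.
Qed.

Lemma mul_tau_frameP (A B C D : 'M[R]_n) a b c d :
  block_mx A B C D *m block_mx a b c d = tau_mx (block_mx a b c d) <->
  cmx A *m cplxmx b a + cmx B *m cplxmx d c = - conjm (cplxmx b a) /\
  cmx C *m cplxmx b a + cmx D *m cplxmx d c = conjm (cplxmx d c).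
Proof.
rewrite tau_block_mx mulmx_block !mul_cmx_cplxmx !cplxmxD !conj_cplxmx cplxmxN opprK.
split=> [/eq_block_mx[-> -> -> ->] // | [/cplxmx_inj[-> ->] /cplxmx_inj[-> ->]]] //.
Qed.

Lemma frame_unitmx P Q : lagrangian_frame P Q -> Q \in unitmx.
Proof.
case=> _ QPE.
apply: (definite_form_unitmx (trmx1 _ _) (@posdefmx1 R n) (two_i_neq0 R)).
by rewrite cmx1 scalemx1; exact: QPE.
Qed.

End LagrangianFrame.

Lemma exists_non_eigenvalue (F : fieldType) n (M : 'M[F]_n) (s : seq F) :
  uniq s -> (n < size s)%N -> exists2 a, a \in s & ~~ eigenvalue M a.
Proof.
move=> s_uniq s_large.
have [all_eigen|] := boolP (all (eigenvalue M) s); last first.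
  by rewrite -has_predC => /hasP[a a_s not_eigen]; exists a.
have roots : all (root (char_poly M)) s.
  by apply: sub_all all_eigen => a; rewrite eigenvalue_root_char.
have := max_poly_roots (monic_neq0 (char_poly_monic M)) roots s_uniq.
by rewrite size_char_poly ltnS leqNgt s_large.
Qed.

Section ConjugationCocycle.
Variables (R : realType) (n : nat).
Implicit Types (M c : 'M[R[i]]_n).

(* The n + 1 points - t / t^* with t = 1 + k i are distinct, so one of them is
   not an eigenvalue of M. *)
Lemma twisted_scalar_unitmx M :
  exists t : R[i], t *: 1%:M + t^*%C *: M \in unitmx.
Proof.
pose t (k : nat) : R[i] := Complex 1 k%:R.
have t_conj_neq0 k : (t k)^*%C != 0 by rewrite eq_complex /= oner_eq0.
pose s := [seq - (t k / (t k)^*%C) | k <- iota 0 n.+1].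
have s_uniq : uniq s.
  rewrite map_inj_uniq ?iota_uniq // => k l /oppr_inj/eqP.
  rewrite eqr_div // => /eqP/(congr1 (@complex.Im R)) /= Ekl.
  by apply/eqP; rewrite -(eqr_nat R); apply/eqP; lra.
have s_size : (n < size s)%N by rewrite size_map size_iota.
have [_ /mapP[k _ ->] not_eigen] := exists_non_eigenvalue M s_uniq s_size.
exists (t k); rewrite unitmxE unitfE; apply: contra not_eigen => /det0P[v v0].
rewrite mulmxDr -!scalemxAr mulmx1 => /eqP; rewrite addr_eq0 => /eqP vME.
apply/eigenvalueP; exists v => //.
rewrite -[v *m M](scalerK (t_conj_neq0 k)) -[_ *: (v *m M)]opprK -vME.
by rewrite scalerN scalerA scaleNr mulrC.
Qed.

Lemma hilbert90_mx M :
  M *m conjm M = 1%:M -> exists2 c, c \in unitmx & conjm c = M *m c.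
Proof.
move=> MM1; have [t cu] := twisted_scalar_unitmx (conjm M).
exists (t *: 1%:M + t^*%C *: conjm M) => //.
rewrite map_mxD !map_mxZ map_mx1 conjmK /= conjcK mulmxDr -!scalemxAr mulmx1.
by rewrite MM1 addrC.
Qed.

Lemma hilbert90_normal M (Y : 'M[R]_n) :
  M *m conjm M = 1%:M -> Y^T = Y -> posdefmx Y -> M^H *m cmx Y *m M = cmx Y ->
  exists c, conjm c = M *m c /\ c^H *m cmx Y *m c = 1%:M.
Proof.
move=> MM1 Ysym Ypos MYM; have [c0 c0u c0E] := hilbert90_mx MM1.
have YM : cmx Y *m M = M^T *m cmx Y.
  have := congr1 conjm MYM; rewrite !map_mxM conjm_cmx map_trmx conjmK => E.
  by rewrite -{1}E -!mulmxA (mulmx1C MM1) mulmx1.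
(* G is real since M^T Y = Y M, so a real congruence normalises it without
   breaking conj c = M c. *)
pose G := c0^H *m cmx Y *m c0.
have Greal : conjm G = G.
  rewrite /G !map_mxM map_trmx conjmK conjm_cmx c0E -mulmxA (mulmxA (cmx Y)) YM.
  by rewrite !mulmxA -trmx_mul -c0E map_trmx.
have Gsym : G^T = G.
  rewrite -[RHS]Greal /G !trmx_mul trmxK -cmxT Ysym !map_mxM conjm_cmx map_trmx.
  by rewrite conjmK mulmxA.
have GE := conjm_real Greal; set Gr := map_mx _ G in GE.
have Grsym : Gr^T = Gr by apply: cmx_inj; rewrite cmxT -GE Gsym.
have [N NE] := posdefmx_congr1 Grsym (posdefmx_congrH Ysym Ypos c0u GE).
exists (c0 *m cmx N); split; first by rewrite map_mxM conjm_cmx c0E mulmxA.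
rewrite map_mxM conjm_cmx trmx_mul -cmxT !mulmxA -(mulmxA (cmx N^T)).
by rewrite -(mulmxA (cmx N^T)) -/G GE -!cmxM NE cmx1.
Qed.

End ConjugationCocycle.

Section SiegelSpace.
Variables (R : realType) (n : nat).
Implicit Types (A B C D : 'M[R]_n) (Z P Q c : 'M[R[i]]_n).

Lemma tau_ZE Z : tau_Z Z = - conjm Z.
Proof. by apply/matrixP => i j; rewrite !mxE. Qed.

Lemma subr_conjm Z : Z - conjm Z = Complex 0 2 *: cmx (map_mx (@complex.Im R) Z).
Proof.
apply/matrixP => i j; rewrite !mxE; case: (Z i j) => x y /=.
by apply/eqP; rewrite eq_complex /=; apply/andP; split; apply/eqP; ring.
Qed.

Lemma frame_siegelE Z c :
  Z^T = Z ->
  lagrangian_frame (Z *m c) c <->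
  c^H *m cmx (map_mx (@complex.Im R) Z) *m c = 1%:M.
Proof.
move=> Zsym; have ZcH : (Z *m c)^H = c^H *m conjm Z.
  by rewrite map_mxM trmx_mul [(map_mx _ Z)^T]map_trmx Zsym.
rewrite /lagrangian_frame ZcH trmx_mul Zsym !mulmxA -mulmxBl -mulmxBr subr_conjm.
rewrite -scalemxAr -scalemxAl -[(Complex 0 2)%:M]scalemx1.
by split=> [[_ /(scalerI (two_i_neq0 R))] | ->].
Qed.

Lemma frame_in_siegel P Q : lagrangian_frame P Q -> in_siegel (P *m invmx Q).
Proof.
move=> frame; have Qu := frame_unitmx frame; case: (frame) => QP _.
set Z := P *m invmx Q.
have Zsym : Z^T = Z.
  have QTu : Q^T \in unitmx by rewrite unitmx_tr.
  by rewrite trmx_mul trmx_inv -[P^T](mulmxK Qu) -QP -mulmxA mulKmx.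
split=> //; move: frame; rewrite -[P](mulmxKV Qu) -/Z frame_siegelE // => QYQ.
have QHu : Q^H \in unitmx by rewrite unitmx_tr map_unitmx.
apply: (posdefmx_congrH (trmx1 _ _) (@posdefmx1 R n) (_ : invmx Q \in unitmx)).
  by rewrite unitmx_inv.
by rewrite cmx1 map_invmx trmx_inv -QYQ !mulmxA mulVmx // mul1mx mulmxK.
Qed.

Lemma sp_act_frame A B C D P Q P' Q' :
  Q \in unitmx -> Q' \in unitmx ->
  cmx A *m P + cmx B *m Q = P' -> cmx C *m P + cmx D *m Q = Q' ->
  sp_act (block_mx A B C D) (P *m invmx Q) = P' *m invmx Q'.
Proof.
move=> Qu Q'u EP EQ.
rewrite /sp_act block_mxKul block_mxKur block_mxKdl block_mxKdr.
have frac (X Y : 'M[R[i]]_n) :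
    X *m (P *m invmx Q) + Y = (X *m P + Y *m Q) *m invmx Q.
  by rewrite mulmxDl -!mulmxA mulmxV // mulmx1.
have Mu : Q' *m invmx Q \in unitmx by rewrite unitmx_mul Q'u unitmx_inv.
rewrite !frac EP EQ -[RHS](mulmxK Mu); congr (_ *m _).
by rewrite mulmxA mulmxKV.
Qed.

Lemma siegel_gamma_frame A B C D P Q :
  lagrangian_frame P Q ->
  cmx A *m P + cmx B *m Q = - conjm P -> cmx C *m P + cmx D *m Q = conjm Q ->
  siegel_gamma (block_mx A B C D) (P *m invmx Q).
Proof.
move=> frame EP EQ; split; first exact: frame_in_siegel.
have Qu := frame_unitmx frame.
by rewrite (sp_act_frame Qu _ EP EQ) ?map_unitmx // tau_ZE map_mxM map_invmx mulNmx.
Qed.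

End SiegelSpace.

Section FixedPoint.
Variables (R : realType) (n : nat) (A B C D : 'M[R]_n) (Z : 'M[R[i]]_n).
Hypothesis Zfix : siegel_gamma (block_mx A B C D) Z.

(* gamma Z = N M^-1; M is the automorphy factor j(gamma, Z). *)
Local Notation Y := (map_mx (@complex.Im R) Z).
Local Notation N := (cmx A *m Z + cmx B).
Local Notation M := (cmx C *m Z + cmx D).

Let Zsym : Z^T = Z. Proof. by case: Zfix => -[]. Qed.
Let Ysym : Y^T = Y. Proof. by rewrite map_trmx Zsym. Qed.
Let Ypos : posdefmx Y. Proof. by case: Zfix => -[]. Qed.

Lemma factor_hermform :
  symplectic (block_mx A B C D) -> M^H *m N - N^H *m M = Complex 0 2 *: cmx Y.
Proof.
move=> gsym.
have gW : cmx (block_mx A B C D) *m col_mx Z 1%:M = col_mx N M.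
  by rewrite [cmx _]map_block_mx mul_block_col !mulmx1.
have := symplectic_hermJ (col_mx Z 1%:M) gsym.
rewrite gW !hermJ_col map_mx1 trmx1 mulmx1 mul1mx [(map_mx _ Z)^T]map_trmx Zsym.
move=> /(congr1 -%R).
by rewrite !opprB => ->; rewrite subr_conjm.
Qed.

Lemma factor_unitmx : symplectic (block_mx A B C D) -> M \in unitmx.
Proof.
move=> gsym.
by have := definite_form_unitmx Ysym Ypos (two_i_neq0 R) (factor_hermform gsym).
Qed.

Lemma factor_numer : symplectic (block_mx A B C D) -> N = - conjm Z *m M.
Proof.
move=> gsym; case: Zfix => _; rewrite /sp_act block_mxKul block_mxKur.
by rewrite block_mxKdl block_mxKdr tau_ZE => <-; rewrite mulmxKV ?factor_unitmx.
Qed.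

Lemma factor_herm : symplectic (block_mx A B C D) -> M^H *m cmx Y *m M = cmx Y.
Proof.
move=> gsym; have := factor_hermform gsym; rewrite factor_numer //.
rewrite map_mxM map_mxN conjmK trmx_mul linearN /= Zsym mulNmx mulmxN.
rewrite !mulmxA mulmxN mulNmx opprK addrC -mulmxBl -mulmxBr subr_conjm.
by rewrite -scalemxAr -scalemxAl => /(scalerI (two_i_neq0 R)).
Qed.

Lemma factor_cocycle :
  symplectic (block_mx A B C D) ->
  block_mx A B C D *m tau_mx (block_mx A B C D) = 1%:M -> M *m conjm M = 1%:M.
Proof.
(* The lower blocks of gamma tau(gamma) = 1 give C A = D C and D D - C B = 1. *)
move=> gsym; rewrite tau_block_mx mulmx_block (scalar_mx_block n n 1).
case/eq_block_mx => _ _ /eqP; rewrite mulmxN subr_eq0 => /eqP CA.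
rewrite mulmxN addrC => DD.
have conjN : Z *m conjm M = - conjm N.
  by rewrite factor_numer // map_mxM map_mxN conjmK mulNmx opprK.
rewrite mulmxDl -mulmxA conjN !map_mxD !map_mxM !conjm_cmx mulmxN !mulmxDr !mulmxA.
by rewrite -!cmxM CA opprD addrACA addNr add0r addrC -cmxN -cmxD DD cmx1.
Qed.

Lemma frame_of_siegel_gamma :
  symplectic (block_mx A B C D) ->
  block_mx A B C D *m tau_mx (block_mx A B C D) = 1%:M ->
  exists P Q, [/\ lagrangian_frame P Q,
    cmx A *m P + cmx B *m Q = - conjm P & cmx C *m P + cmx D *m Q = conjm Q].
Proof.
move=> gsym ginv.
have [c [cE cYc]] :=
  hilbert90_normal (factor_cocycle gsym ginv) Ysym Ypos (factor_herm gsym).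
exists (Z *m c), c; split; first exact/(frame_siegelE c Zsym).
  by rewrite mulmxA -mulmxDl factor_numer // -mulmxA -cE mulNmx map_mxM.
by rewrite mulmxA -mulmxDl cE.
Qed.

End FixedPoint.

Theorem lemma3p5 (R : realType) (n : nat) (gamma : 'M[R]_(n + n)) :
  symplectic gamma -> gamma *m tau_mx gamma = 1%:M ->
  ((exists h : 'M[R]_(n + n), symplectic h /\ gamma = tau_mx h *m invmx h) <->
   (exists Z : 'M[R[i]]_n, siegel_gamma gamma Z)).
Proof.
rewrite -(submxK gamma).
move: (ulsubmx gamma) (ursubmx gamma) (dlsubmx gamma) (drsubmx gamma) => A B C D.
move=> gsym ginv; split=> [[h [hsym gE]] | [Z Zfix]].
  have gh : block_mx A B C D *m h = tau_mx h.
    by rewrite gE mulmxKV // symplectic_unitmx.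
  move: hsym gh; rewrite -(submxK h).
  move: (ulsubmx h) (ursubmx h) (dlsubmx h) (drsubmx h) => a b c d.
  move=> /symplectic_frameP frame /mul_tau_frameP[EP EQ].
  by exists (cplxmx b a *m invmx (cplxmx d c)); apply: siegel_gamma_frame.
have [P [Q [frame EP EQ]]] := frame_of_siegel_gamma Zfix gsym ginv.
move: frame EP EQ; rewrite (cplxmx_eta P) (cplxmx_eta Q).
set b := map_mx (@complex.Re R) P; set a := map_mx (@complex.Im R) P.
set d := map_mx (@complex.Re R) Q; set c := map_mx (@complex.Im R) Q.
move=> /symplectic_frameP hsym EP EQ.
have /mul_tau_frameP gh := conj EP EQ.
exists (block_mx a b c d); split=> //.
by rewrite -gh mulmxK // symplectic_unitmx.
Qed.
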